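(* Let $B\colon\mathbf{Set}\to\mathbf{Set}$ be a functor, $\Lambda$ a set, $(\tau_\lambda\colon B\mathbb{R}\to\mathbb{R})_{\lambda\in\Lambda}$ arbitrary functions, and $x\colon X\to BX$ a coalgebra. Every entourage of the logical uniformity of $x$ is an entourage of the bisimulation uniformity of $x$. In particular, for every formula $\varphi$, $[\![\varphi]\!]_x\colon X\to\mathbb{R}$ is uniformly continuous with respect to the bisimulation uniformity.
   Context: For a set $Y$ and a family $F$ of functions $Y\to\mathbb{R}$, let $\mathscr{U}(F)$ denote the coarsest uniformity on $Y$ making every $f\in F$ uniformly continuous into $\mathbb{R}$ with the Euclidean uniformity $\mathscr{U}_e$. Formulas: $\varphi::=1\mid\min(\varphi_1,\varphi_2)\mid r+\varphi\mid r\times\varphi\ (r\in\mathbb{R})\mid\heartsuit_\lambda\varphi$; semantics $[\![1]\!]=1$, $\min$ pointwise, $[\![r+\varphi]\!]=r+[\![\varphi]\!]$, $[\![r\times\varphi]\!]=r[\![\varphi]\!]$, $[\![\heartsuit_\lambda\varphi]\!]_x=\tau_\lambda\circ B[\![\varphi]\!]_x\circ x$. The logical uniformity of $x$ is $\mathscr{U}(\{[\![\varphi]\!]_x\mid\varphi\})$. For a uniformity $\mathscr{U}$ on $X$, let $\Phi(\mathscr{U})=\mathscr{U}(\{\tau_\lambda\circ Bh\circ x\mid\lambda\in\Lambda,\ h\colon(X,\mathscr{U})\to(\mathbb{R},\mathscr{U}_e)$ uniformly continuous$\})$. Uniformities on $X$ are ordered by $\mathscr{U}\sqsubseteq\mathscr{V}$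 iff $\mathscr{U}\supseteq\mathscr{V}$ (finer is smaller); the bisimulation uniformity is the $\sqsubseteq$-greatest fixed point of $\Phi$. *)

From Stdlib Require Import Reals.
Open Scope R_scope.

Definition entourage (Y : Type) := Y -> Y -> Prop.
Definition unif (Y : Type) := entourage Y -> Prop.

Definition is_uniformity {Y : Type} (U : unif Y) : Prop :=
  U (fun _ _ => True) /\
  (forall E F : entourage Y, U E -> (forall a b, E a b -> F a b) -> U F) /\
  (forall E F : entourage Y, U E -> U F -> U (fun a b => E a b /\ F a b)) /\
  (forall E : entourage Y, U E -> forall a, E a a) /\
  (forall E : entourage Y, U E -> U (fun a b => E b a)) /\
  (forall E : entourage Y, U E ->
     exists F : entourage Y, U F /\
       (forall a b c, F a b -> F b c -> E a c)).

Definition euclid_unif : unif R :=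
  fun E => exists eps, 0 < eps /\ forall a b, Rabs (a - b) < eps -> E a b.

Definition unif_cont {Y Z : Type} (U : unif Y) (V : unif Z) (f : Y -> Z) : Prop :=
  forall E : entourage Z, V E -> U (fun a b => E (f a) (f b)).

Definition unif_gen {Y : Type} (F : (Y -> R) -> Prop) : unif Y :=
  fun E => forall U : unif Y, is_uniformity U ->
             (forall f, F f -> unif_cont U euclid_unif f) -> U E.

Definition functor_laws {B : Type -> Type}
  (Bmap : forall A C : Type, (A -> C) -> B A -> B C) : Prop :=
  (forall (A : Type) (t : B A), Bmap A A (fun a => a) t = t) /\
  (forall (A C D : Type) (f : A -> C) (g : C -> D) (t : B A),
      Bmap A D (fun a => g (f a)) t = Bmap C D g (Bmap A C f t)).

Inductive formula (Lam : Type) : Type :=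
| FOne : formula Lam
| FMin : formula Lam -> formula Lam -> formula Lam
| FAdd : R -> formula Lam -> formula Lam
| FMul : R -> formula Lam -> formula Lam
| FHeart : Lam -> formula Lam -> formula Lam.

Fixpoint sem {B : Type -> Type} (Bmap : forall A C : Type, (A -> C) -> B A -> B C)
  {Lam : Type} (tau : Lam -> B R -> R) {X : Type} (x : X -> B X)
  (phi : formula Lam) : X -> R :=
  match phi with
  | FOne _ => fun _ => 1
  | FMin _ p q => fun s => Rmin (sem Bmap tau x p s) (sem Bmap tau x q s)
  | FAdd _ r p => fun s => r + sem Bmap tau x p s
  | FMul _ r p => fun s => r * sem Bmap tau x p s
  | FHeart _ l p => fun s => tau l (Bmap X R (sem Bmap tau x p) (x s))
  end.

Definition logical_unif {B : Type -> Type}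
  (Bmap : forall A C : Type, (A -> C) -> B A -> B C)
  {Lam : Type} (tau : Lam -> B R -> R) {X : Type} (x : X -> B X) : unif X :=
  unif_gen (fun f => exists phi : formula Lam, f = sem Bmap tau x phi).

Definition PhiOp {B : Type -> Type}
  (Bmap : forall A C : Type, (A -> C) -> B A -> B C)
  {Lam : Type} (tau : Lam -> B R -> R) {X : Type} (x : X -> B X)
  (U : unif X) : unif X :=
  unif_gen (fun g => exists (l : Lam) (h : X -> R),
                unif_cont U euclid_unif h /\ g = fun s => tau l (Bmap X R h (x s))).

Definition is_fixpoint {X : Type} (Phi : unif X -> unif X) (U : unif X) : Prop :=
  is_uniformity U /\ forall E, Phi U E <-> U E.

(* W is the ⊑-greatest fixed point, where U ⊑ V iff U ⊇ V:
   every fixed point V satisfies V ⊑ W, i.e. W ⊆ V (W is the coarsest). *)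
Definition is_greatest_fixpoint {X : Type} (Phi : unif X -> unif X) (W : unif X) : Prop :=
  is_fixpoint Phi W /\
  forall V, is_fixpoint Phi V -> forall E, W E -> V E.

From Stdlib Require Import Reals Lra.
Open Scope R_scope.

(* Only the inclusion Φ(W) ⊆ W is used: by induction on φ, [[φ]] is uniformly
   continuous for W, the modal step because τ_λ ∘ B[[φ]] ∘ x is one of the
   generators of Φ(W).  Hence the generated uniformity U({[[φ]]}) is contained
   in W. *)

Lemma Rabs_Rmin_sub_lt a b c d eps :
  Rabs (a - c) < eps -> Rabs (b - d) < eps -> Rabs (Rmin a b - Rmin c d) < eps.
Proof.
  intros Hac Hbd; apply Rabs_def2 in Hac; apply Rabs_def2 in Hbd.
  unfold Rmin; destruct (Rle_dec a b), (Rle_dec c d); apply Rabs_def1; lra.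
Qed.

Section UniformContinuity.

Variables (Y : Type) (U : unif Y).
Hypothesis HU : is_uniformity U.

Lemma unif_contP (f : Y -> R) :
  unif_cont U euclid_unif f <->
  forall eps, 0 < eps -> U (fun a b => Rabs (f a - f b) < eps).
Proof.
  destruct HU as [_ [HUsup _]]; split.
  - intros Hf eps Heps; apply (Hf (fun u v => Rabs (u - v) < eps)).
    exists eps; auto.
  - intros Hball E [eps [Heps HE]].
    apply (HUsup _ _ (Hball eps Heps)); auto.
Qed.

Lemma unif_cont_const (c : R) : unif_cont U euclid_unif (fun _ => c).
Proof.
  destruct HU as [HUT [HUsup _]].
  intros E [eps [Heps HE]]; apply (HUsup _ _ HUT); intros a b _.
  apply HE; rewrite Rminus_diag, Rabs_R0; exact Heps.
Qed.

Lemma unif_cont_addl (r : R) (f : Y -> R) :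
  unif_cont U euclid_unif f -> unif_cont U euclid_unif (fun s => r + f s).
Proof.
  rewrite !unif_contP; intros Hf eps Heps.
  destruct HU as [_ [HUsup _]]; apply (HUsup _ _ (Hf eps Heps)); intros a b H.
  replace (r + f a - (r + f b)) with (f a - f b) by ring; exact H.
Qed.

Lemma unif_cont_scalel (r : R) (f : Y -> R) :
  unif_cont U euclid_unif f -> unif_cont U euclid_unif (fun s => r * f s).
Proof.
  rewrite !unif_contP; intros Hf eps Heps.
  set (k := Rabs r + 1).
  assert (Hk : 0 < k) by (pose proof (Rabs_pos r); unfold k; lra).
  destruct HU as [_ [HUsup _]].
  apply (HUsup _ _ (Hf (eps / k) (Rdiv_lt_0_compat _ _ Heps Hk))); intros a b H.
  rewrite <- Rmult_minus_distr_l, Rabs_mult.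
  assert (Hdist : Rabs (f a - f b) * k < eps).
  { apply (Rmult_lt_compat_r k) in H; [|exact Hk].
    replace (eps / k * k) with eps in H by (field; lra); exact H. }
  pose proof (Rabs_pos (f a - f b)); unfold k in Hdist; nra.
Qed.

Lemma unif_cont_min (f g : Y -> R) :
  unif_cont U euclid_unif f -> unif_cont U euclid_unif g ->
  unif_cont U euclid_unif (fun s => Rmin (f s) (g s)).
Proof.
  rewrite !unif_contP; intros Hf Hg eps Heps.
  destruct HU as [_ [HUsup [HUcap _]]].
  apply (HUsup _ _ (HUcap _ _ (Hf eps Heps) (Hg eps Heps))).
  intros a b [Hfab Hgab]; exact (Rabs_Rmin_sub_lt _ _ _ _ _ Hfab Hgab).
Qed.

End UniformContinuity.

Lemma unif_gen_cont {Y : Type} (F : (Y -> R) -> Prop) (f : Y -> R) :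
  F f -> unif_cont (unif_gen F) euclid_unif f.
Proof. intros Hf E HE U _ HF; exact (HF f Hf E HE). Qed.

Lemma unif_gen_sub {Y : Type} (F : (Y -> R) -> Prop) (U : unif Y) :
  is_uniformity U -> (forall f, F f -> unif_cont U euclid_unif f) ->
  forall E, unif_gen F E -> U E.
Proof. intros HU HF E HE; exact (HE U HU HF). Qed.

Section PostFixpoint.

Variables (B : Type -> Type) (Bmap : forall A C : Type, (A -> C) -> B A -> B C).
Variables (Lam : Type) (tau : Lam -> B R -> R) (X : Type) (x : X -> B X).
Variable W : unif X.
Hypothesis HW : is_uniformity W.
Hypothesis PhiW_sub : forall E, PhiOp Bmap tau x W E -> W E.

Lemma unif_cont_modal (l : Lam) (h : X -> R) :
  unif_cont W euclid_unif h ->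
  unif_cont W euclid_unif (fun s => tau l (Bmap X R h (x s))).
Proof.
  intros Hh E HE; apply PhiW_sub.
  apply unif_gen_cont; [|exact HE].
  exists l, h; auto.
Qed.

Lemma unif_cont_sem (phi : formula Lam) :
  unif_cont W euclid_unif (sem Bmap tau x phi).
Proof.
  induction phi; simpl.
  - apply unif_cont_const; exact HW.
  - apply unif_cont_min; assumption.
  - apply unif_cont_addl; assumption.
  - apply unif_cont_scalel; assumption.
  - apply unif_cont_modal; assumption.
Qed.

Lemma logical_unif_sub (E : entourage X) : logical_unif Bmap tau x E -> W E.
Proof.
  apply unif_gen_sub; [exact HW|].
  intros f [phi ->]; apply unif_cont_sem.
Qed.

End PostFixpoint.

Theorem mainTheorem11
  (B : Type -> Type) (Bmap : forall A C : Type, (A -> C) -> B A -> B C)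
  (HB : functor_laws Bmap)
  (Lam : Type) (tau : Lam -> B R -> R)
  (X : Type) (x : X -> B X)
  (W : unif X) (HW : is_greatest_fixpoint (PhiOp Bmap tau x) W) :
  (forall E, logical_unif Bmap tau x E -> W E) /\
  (forall phi : formula Lam, unif_cont W euclid_unif (sem Bmap tau x phi)).
Proof.
  destruct HW as [[HWunif HWfix] _].
  assert (PhiW_sub : forall E, PhiOp Bmap tau x W E -> W E)
    by (intros E; apply HWfix).
  split.
  - exact (logical_unif_sub B Bmap Lam tau X x W HWunif PhiW_sub).
  - exact (unif_cont_sem B Bmap Lam tau X x W HWunif PhiW_sub).
Qed.
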